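(* Let $(\Omega,P,J)$ be a NAP-space. Then $\ker(J)$ is a fine ideal of $\mathfrak F(\mathcal P_{fin}(\Omega),\mathbb R)$.
   Context: Let $\Omega$ be a nonempty set, $\mathcal P_{fin}(\Omega)$ the set of finite subsets of $\Omega$, and $\mathfrak F=\mathfrak F(\mathcal P_{fin}(\Omega),\mathbb R)$ the real algebra of all functions $\mathcal P_{fin}(\Omega)\to\mathbb R$ with pointwise operations. For $\omega\in\Omega$, $\chi_\lambda(\omega)=1$ if $\omega\in\lambda$ and $0$ otherwise. An ideal $I$ of $\mathfrak F$ is fine if it is maximal and, for every $\omega\in\Omega$, $\lambda\mapsto1-\chi_\lambda(\omega)$ belongs to $I$. A superreal field is an ordered field containing $\mathbb R$ as an ordered subfield. A NAP-space $(\Omega,P,J)$ consists of a superreal field $\mathcal R$, a function $P:\mathcal P(\Omega)\to\mathcal R$ and an algebra homomorphism $J:\mathfrak F\to\mathcal R$ such that: (NAP1) $P(A)\ge0$ for all $A\subseteq\Omega$; (NAP2) $P(A)=1$ iff $A=\Omega$; (NAP3) $P(A\cup B)=P(A)+P(B)$ whenever $A\cap B=\varnothing$; (NAP4) writing $P(A\mid B)=P(A\cap B)/P(B)$ for $B\neq\varnothing$, one has $P(A\mid\lambda)\in\mathbb R$ for every nonempty finite $\lambda$ and every $A$, and $P(A)=J(\varphi_A)$ for every $A\subseteq\Omega$, where $\varphi_A(\lambda)=P(A\mid\lambda)$ for nonempty finite $\lambda$ (and $\varphi_A(\varnothing)$ is an arbitrary fixed real value). *)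

From Stdlib Require Import Reals ClassicalEpsilon.
From HB Require Import structures.
From mathcomp Require Import all_boot all_order all_algebra.
Set Implicit Arguments. Unset Strict Implicit. Unset Printing Implicit Defensive.
Import Order.TTheory GRing.Theory Num.Theory.
Local Open Scope ring_scope.

Definition Pfin (Omega : Type) : Type :=
  {A : Omega -> Prop | exists l : list Omega, forall x, A x <-> List.In x l}.

Definition FunAlg (Omega : Type) : Type := Pfin Omega -> R.

Definition chi (Omega : Type) (lam : Pfin Omega) (w : Omega) : R :=
  if excluded_middle_informative (proj1_sig lam w) then R1 else R0.

Definition is_ideal (Omega : Type) (I : FunAlg Omega -> Prop) : Prop :=
  I (fun _ => R0) /\
  (forall f g, I f -> I g -> I (fun l => Rplus (f l) (g l))) /\
  (forall f g, I f -> I (fun l => Rmult (g l) (f l))).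

Definition is_maximal_ideal (Omega : Type) (I : FunAlg Omega -> Prop) : Prop :=
  is_ideal I /\ ~ I (fun _ => R1) /\
  (forall K : FunAlg Omega -> Prop, is_ideal K -> (forall f, I f -> K f) ->
     (forall f, K f -> I f) \/ (forall f, K f)).

Definition is_fine_ideal (Omega : Type) (I : FunAlg Omega -> Prop) : Prop :=
  is_maximal_ideal I /\
  (forall w : Omega, I (fun l => Rminus R1 (chi l w))).

(* e : R -> F exhibits R as an ordered subfield of the ordered field F. *)
Definition is_superreal_embedding (F : realFieldType) (e : R -> F) : Prop :=
  (forall x y, e (Rplus x y) = e x + e y) /\
  (forall x y, e (Rmult x y) = e x * e y) /\
  e R1 = 1 /\
  (forall x y, Rle x y <-> e x <= e y).

(* Unital real-algebra homomorphism FunAlg Omega -> F (F an R-algebra via e). *)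
Definition is_real_algebra_hom (Omega : Type) (F : realFieldType) (e : R -> F)
    (J : FunAlg Omega -> F) : Prop :=
  (forall f g, J (fun l => Rplus (f l) (g l)) = J f + J g) /\
  (forall f g, J (fun l => Rmult (f l) (g l)) = J f * J g) /\
  (forall (r : R) f, J (fun l => Rmult r (f l)) = e r * J f) /\
  J (fun _ => R1) = 1.

Definition cond_prob (Omega : Type) (F : realFieldType)
    (P : (Omega -> Prop) -> F) (A B : Omega -> Prop) : F :=
  P (fun x => A x /\ B x) / P B.

Definition nonempty (Omega : Type) (lam : Pfin Omega) : Prop :=
  exists x, proj1_sig lam x.

Definition is_NAP_space (Omega : Type) (F : realFieldType) (e : R -> F)
    (P : (Omega -> Prop) -> F) (J : FunAlg Omega -> F) : Prop :=
  inhabited Omega /\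
  is_superreal_embedding e /\
  is_real_algebra_hom e J /\
  (forall A, 0 <= P A) /\
  (forall A, P A = 1 <-> (forall x, A x)) /\
  (forall A B, (forall x, ~ (A x /\ B x)) ->
                P (fun x => A x \/ B x) = P A + P B) /\
  (forall A (lam : Pfin Omega), nonempty lam ->
     exists r : R, cond_prob P A (proj1_sig lam) = e r) /\
  (* NAP4, P(A) = J(phi_A), with phi_A(empty) a fixed real c0 *)
  (exists c0 : R, forall A (phi : FunAlg Omega),
     (forall lam, nonempty lam -> e (phi lam) = cond_prob P A (proj1_sig lam)) ->
     (forall lam, ~ nonempty lam -> phi lam = c0) ->
     P A = J phi).

From Stdlib Require Import Reals.
From mathcomp Require Import all_boot all_order all_algebra.
From Stdlib Require Import FunctionalExtensionality PropExtensionality ClassicalEpsilon Classical.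
From mathcomp Require Import lra.
Import Order.TTheory GRing.Theory Num.Theory.
Local Open Scope ring_scope.

(* Let (Omega, P, J) be a NAP-space.
   1. The kernel of any unital homomorphism J from the real algebra of
      functions on P_fin(Omega) into a field is a maximal ideal: an ideal K
      strictly containing ker J holds some f with J f <> 0; with g the
      pointwise inverse of f on its support, J (g f) = 1, so 1 - g f lies in
      ker J, hence in K, and then 1 = g f + (1 - g f) lies in K.
   2. Fineness.  Let delta be the indicator of the empty finite set.  Since
      phi_Omega - phi_empty = 1 - delta, we get J delta = 1 - (P Omega -
      P empty) = 0.  For w in Omega, (1 - chi(w)) phi_{w} = c0 delta
      pointwise (phi_{w}(lam) = 0 for nonempty lam not containing w), so
      J(1 - chi(w)) P({w}) = 0, and P({w}) <> 0 forces J(1 - chi(w)) = 0.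
   The file first proves the algebraic fact 1, then the elementary
   properties of P and of conditional probabilities used in 2, and finally
   assembles the theorem. *)

Lemma pred_ext (T : Type) (A B : T -> Prop) : (forall x, A x <-> B x) -> A = B.
Proof.
move=> AB; apply: functional_extensionality => x.
exact: propositional_extensionality.
Qed.

Section KernelOfAlgebraHom.
Context {Omega : Type} {F : realFieldType} {e : R -> F} {J : FunAlg Omega -> F}.
Hypothesis HJ : is_real_algebra_hom e J.

(* The kernel of a unital ring homomorphism from the function algebra into
   the field F; only additivity, multiplicativity and J 1 = 1 are used. *)
Let kerJ (f : FunAlg Omega) : Prop := J f = 0.

Lemma J_ext (f g : FunAlg Omega) : (forall l, f l = g l) -> J f = J g.
Proof. by move=> fg; rewrite (functional_extensionality f g fg). Qed.

Lemma J_sub (f g : FunAlg Omega) :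
  J (fun l => Rminus (f l) (g l)) = J f - J g.
Proof.
have [Jadd _] := HJ.
have sum_fg : J (fun l => Rplus (Rminus (f l) (g l)) (g l)) = J f.
  by apply: J_ext => l; rewrite /Rminus Rplus_assoc Rplus_opp_l Rplus_0_r.
by rewrite -sum_fg Jadd addrK.
Qed.

Lemma J_zero : J (fun _ => R0) = 0.
Proof.
rewrite -(subrr (J (fun _ => R1))) -J_sub.
by apply: J_ext => l; rewrite Rminus_diag.
Qed.

Lemma kernel_is_ideal : is_ideal kerJ.
Proof.
have [Jadd [Jmul _]] := HJ.
split; first exact: J_zero.
split; first by move=> f g; rewrite /kerJ Jadd => -> ->; rewrite addr0.
by move=> f g; rewrite /kerJ Jmul => ->; rewrite mulr0.
Qed.

Lemma ideal_above_kernel_has_one {K : FunAlg Omega -> Prop} {f : FunAlg Omega} :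
  is_ideal K -> (forall h, kerJ h -> K h) -> K f -> J f <> 0 -> K (fun _ => R1).
Proof.
move=> [_ [Kadd Kmul]] kerK Kf Jf_neq0.
have [_ [Jmul [_ Jone]]] := HJ.
pose g l := if Req_appart_dec (f l) R0 then R0 else Rinv (f l).
have gf_f : forall l, Rmult (f l) (Rmult (g l) (f l)) = f l.
  move=> l; rewrite /g; case: Req_appart_dec => [f0 | f_neq0] /=.
    by rewrite f0 !Rmult_0_l.
  rewrite Rinv_l ?Rmult_1_r //.
  by case: f_neq0; [apply: Rlt_not_eq | apply: Rgt_not_eq].
have J_gf : J (fun l => Rmult (g l) (f l)) = 1.
  apply: (mulfI (x := J f)); first exact/eqP.
  by rewrite -Jmul mulr1; apply: J_ext.
have K_gf : K (fun l => Rmult (g l) (f l)) by apply: Kmul.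
have K_co_gf : K (fun l => Rminus R1 (Rmult (g l) (f l))).
  by apply: kerK; rewrite /kerJ J_sub Jone J_gf subrr.
have -> : (fun _ => R1) = (fun l => Rplus (Rmult (g l) (f l))
                                          (Rminus R1 (Rmult (g l) (f l)))).
  by apply: functional_extensionality => l; rewrite Rplus_minus.
exact: Kadd.
Qed.

Lemma kernel_is_maximal : is_maximal_ideal kerJ.
Proof.
have [_ [_ [_ Jone]]] := HJ.
split; first exact: kernel_is_ideal.
split; first by rewrite /kerJ Jone; apply/eqP; exact: oner_neq0.
move=> K K_ideal kerK.
case: (classic (exists f, K f /\ J f <> 0)) => [[f [Kf Jf_neq0]] | no_f].
  right=> h; have K1 := ideal_above_kernel_has_one K_ideal kerK Kf Jf_neq0.
  have [_ [_ Kmul]] := K_ideal.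
  have -> : h = (fun l => Rmult (h l) R1).
    by apply: functional_extensionality => l; rewrite Rmult_1_r.
  exact: Kmul.
left=> f Kf; apply: NNPP => Jf_neq0; apply: no_f; by exists f.
Qed.

End KernelOfAlgebraHom.

Section SuperrealEmbedding.
Context {F : realFieldType} {e : R -> F}.
Hypothesis He : is_superreal_embedding e.

Lemma embedding_zero : e R0 = 0.
Proof. have [eadd _] := He; have := eadd R0 R0; rewrite Rplus_0_r; lra. Qed.

Lemma embedding_inj (x y : R) : e x = e y -> x = y.
Proof.
have [_ [_ [_ emono]]] := He => exy.
by apply: Rle_antisym; apply/emono; rewrite exy.
Qed.

End SuperrealEmbedding.

Section FiniteAdditivity.
Context {Omega : Type} {F : realFieldType} {P : (Omega -> Prop) -> F}.
Hypothesis P_one : forall A, P A = 1 <-> (forall x, A x).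
Hypothesis P_add : forall A B, (forall x, ~ (A x /\ B x)) ->
  P (fun x => A x \/ B x) = P A + P B.

Lemma P_empty : P (fun _ => False) = 0.
Proof.
have := P_add (fun _ => False) (fun _ => False) (fun x xx => proj1 xx).
by rewrite (@pred_ext _ (fun _ => False \/ False) (fun _ => False)); [lra | tauto].
Qed.

Lemma P_nonempty_neq0 (A : Omega -> Prop) : (exists x, A x) -> P A != 0.
Proof.
move=> [x Ax]; apply/eqP => PA0.
have := P_add A (fun y => ~ A y) (fun y Ay => proj2 Ay (proj1 Ay)).
rewrite (@pred_ext _ (fun y => A y \/ ~ A y) (fun _ => True)); last by move=> y; tauto.
have -> : P (fun _ => True) = 1 by apply/P_one.
rewrite PA0 add0r => /esym /P_one notA_all.
exact: notA_all x Ax.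
Qed.

Lemma cond_prob_full (lam : Omega -> Prop) :
  (exists x, lam x) -> cond_prob P (fun _ => True) lam = 1.
Proof.
move=> lam_ne; rewrite /cond_prob.
rewrite (@pred_ext _ (fun x => True /\ lam x) lam); last by move=> x; tauto.
exact/divff/P_nonempty_neq0.
Qed.

Lemma cond_prob_disjoint (A lam : Omega -> Prop) :
  (forall x, ~ (A x /\ lam x)) -> cond_prob P A lam = 0.
Proof.
move=> disj; rewrite /cond_prob.
rewrite (@pred_ext _ (fun x => A x /\ lam x) (fun _ => False)).
  by rewrite P_empty mul0r.
by move=> x; split=> // /disj.
Qed.

End FiniteAdditivity.

Section NAPSpace.
Context {Omega : Type} {F : realFieldType} {e : R -> F}
  {P : (Omega -> Prop) -> F} {J : FunAlg Omega -> F} {c0 : R}.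
Hypothesis He : is_superreal_embedding e.
Hypothesis HJ : is_real_algebra_hom e J.
Hypothesis P_one : forall A, P A = 1 <-> (forall x, A x).
Hypothesis P_add : forall A B, (forall x, ~ (A x /\ B x)) ->
  P (fun x => A x \/ B x) = P A + P B.
Hypothesis cond_prob_real : forall A (lam : Pfin Omega), nonempty lam ->
  exists r : R, cond_prob P A (proj1_sig lam) = e r.
Hypothesis P_is_J_phi : forall A (phi : FunAlg Omega),
  (forall lam, nonempty lam -> e (phi lam) = cond_prob P A (proj1_sig lam)) ->
  (forall lam, ~ nonempty lam -> phi lam = c0) ->
  P A = J phi.

Definition is_phi (A : Omega -> Prop) (phi : FunAlg Omega) : Prop :=
  (forall lam, nonempty lam -> e (phi lam) = cond_prob P A (proj1_sig lam)) /\
  (forall lam, ~ nonempty lam -> phi lam = c0).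

Lemma P_eq_J_phi {A : Omega -> Prop} {phi : FunAlg Omega} :
  is_phi A phi -> P A = J phi.
Proof. by move=> [phi_ne phi_e]; exact: P_is_J_phi. Qed.

Lemma phi_exists (A : Omega -> Prop) : exists phi, is_phi A phi.
Proof.
exists (fun lam => match excluded_middle_informative (nonempty lam) with
  | left lam_ne =>
      proj1_sig (constructive_indefinite_description _ (cond_prob_real A lam lam_ne))
  | right _ => c0 end).
split=> lam lam_ne; case: excluded_middle_informative => // lam_ne'.
by case: constructive_indefinite_description.
Qed.

Definition empty_indicator (lam : Pfin Omega) : R :=
  if excluded_middle_informative (nonempty lam) then R0 else R1.

Lemma empty_indicator_nonempty (lam : Pfin Omega) :
  nonempty lam -> empty_indicator lam = R0.
Proof. by rewrite /empty_indicator; case: excluded_middle_informative. Qed.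

Lemma empty_indicator_empty (lam : Pfin Omega) :
  ~ nonempty lam -> empty_indicator lam = R1.
Proof. by rewrite /empty_indicator; case: excluded_middle_informative. Qed.

(* phi_Omega - phi_empty = 1 - delta, whose image under J is P(Omega) = 1. *)
Lemma empty_indicator_in_kernel : J empty_indicator = 0.
Proof.
have [_ [_ [_ Jone]]] := HJ.
have [phiT phiT_spec] := phi_exists (fun _ => True).
have [phiF phiF_spec] := phi_exists (fun _ => False).
have J_diff : J (fun l => Rminus (phiT l) (phiF l)) = 1.
  rewrite (J_sub HJ) -(P_eq_J_phi phiT_spec) -(P_eq_J_phi phiF_spec).
  by rewrite (P_empty P_add) subr0; apply/P_one.
have [phiT_ne phiT_e] := phiT_spec; have [phiF_ne phiF_e] := phiF_spec.
rewrite -(subrr (J (fun _ => R1))) {2}Jone -J_diff -(J_sub HJ).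
apply: J_ext => l; have [l_ne | l_e] := classic (nonempty l); last first.
  by rewrite empty_indicator_empty // phiT_e // phiF_e // Rminus_diag Rminus_0_r.
rewrite empty_indicator_nonempty //.
have -> : phiT l = R1.
  apply: (embedding_inj He); have [_ [_ [-> _]]] := He.
  by rewrite phiT_ne // (cond_prob_full P_one P_add).
have -> : phiF l = R0.
  apply: (embedding_inj He); rewrite (embedding_zero He) phiF_ne //.
  exact: cond_prob_disjoint P_add _ _ (fun x xl => proj1 xl).
by rewrite Rminus_0_r Rminus_diag.
Qed.

Lemma co_chi_times_phi_singleton {w : Omega} {phi : FunAlg Omega} :
  is_phi (fun x => x = w) phi ->
  (fun l => Rmult (Rminus R1 (chi l w)) (phi l)) =
  (fun l => Rmult c0 (empty_indicator l)).
Proof.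
move=> [phi_ne phi_e]; apply: functional_extensionality => l.
rewrite /chi; case: excluded_middle_informative => w_in_l.
  rewrite empty_indicator_nonempty; last by exists w.
  by rewrite Rminus_diag Rmult_0_l Rmult_0_r.
have [l_ne | l_e] := classic (nonempty l); last first.
  by rewrite phi_e // empty_indicator_empty // Rminus_0_r Rmult_1_l Rmult_1_r.
have -> : phi l = R0.
  apply: (embedding_inj He); rewrite (embedding_zero He) phi_ne //.
  by apply: (cond_prob_disjoint P_add) => x [-> ?].
by rewrite empty_indicator_nonempty // !Rmult_0_r.
Qed.

Lemma co_chi_in_kernel (w : Omega) : J (fun l => Rminus R1 (chi l w)) = 0.
Proof.
have [_ [Jmul [Jscale _]]] := HJ.
have [phi phi_w] := phi_exists (fun x => x = w).
have := congr1 J (co_chi_times_phi_singleton phi_w).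
rewrite Jmul Jscale empty_indicator_in_kernel mulr0.
rewrite -(P_eq_J_phi phi_w) => /eqP; rewrite mulf_eq0 => /orP[/eqP //|].
move=> /eqP P_w0; have := P_nonempty_neq0 P_one P_add (fun x => x = w).
by rewrite P_w0 eqxx => /(_ (ex_intro _ w erefl)).
Qed.

End NAPSpace.

Theorem mainTheorem7 (Omega : Type) (F : realFieldType) (e : R -> F)
    (P : (Omega -> Prop) -> F) (J : FunAlg Omega -> F) :
  is_NAP_space e P J -> is_fine_ideal (fun f : FunAlg Omega => J f = 0%R).
Proof.
move=> [_ [He [HJ [_ [P_one [P_add [cond_prob_real [c0 P_is_J_phi]]]]]]]].
split; first exact: kernel_is_maximal HJ.
exact: co_chi_in_kernel He HJ P_one P_add cond_prob_real P_is_J_phi.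
Qed.
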